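(* For every vertex $\mathbf{x}$ of $P^n_{\mathrm{SEP}}$, the optimal values of the linear programs $\mathcal{D}\mathrm{OPT}^+(\mathbf{x})$ and $\mathcal{D}\mathrm{OPT}^{\mathrm{II}}(\mathbf{x})$ coincide.
   Context: $K_n=(V_n,E_n)$ is the complete undirected graph on $n$ nodes; $\delta(S)$ is the set of edges with exactly one endpoint in $S$. $P^n_{\mathrm{SEP}}=\{\mathbf{x}\in\mathbb{R}^{E_n} : \sum_{e\in\delta(v)}x_e=2\ \forall v;\ \sum_{e\in\delta(S)}x_e\ge 2\ \forall S \text{ with } 3\le|S|\le n-3;\ 0\le x_e\le 1\}$; a vertex is an extreme point. The support graph of $\mathbf{x}$ is $G_{\mathbf{x}}=(V_n,E_{\mathbf{x}})$ with $E_{\mathbf{x}}=\{e:x_e>0\}$. A tour is a Hamiltonian cycle of $K_n$, identified with its 0/1 characteristic vector $\mathbf{t}$. A walk on a graph $G$ is a closed walk visiting every node at least once; it is identified with its characteristic vector $\mathbf{w}$, where $w_{ij}$ is the number of times the edge $ij$ is traversed, and only walks with $w_{ij}\in\{0,1,2\}$ for all edges are considered (so there are finitely many). Edges are unordered ($ij=ji$), and accordingly $\lambda_{ijk}$ and $\lambda_{jik}$ denote the same variable (but $\lambda_{ijk}$ and $\lambda_{kji}$ are different). $\mathcal{D}\mathrm{OPT}^+(\mathbf{x})$: maximize $\sum_{\mathbf{t}\text{ tour}}\mu_{\mathbf{t}}$ subject to $\sum_{k\ne i,j}(-\lambda_{ijk}+\lambda_{ikj}+\lambda_{jki})+\sum_{\mathbf{t}}t_{ij}\mu_{\mathbf{t}}\le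 x_{ij}$ for all $ij\in E_n$, $\lambda_{ijk}\ge0$ for all $ij\in E_n$, $k\in V_n\setminus\{i,j\}$, and $\mu_{\mathbf{t}}\ge0$ for all tours $\mathbf{t}$. $\mathcal{D}\mathrm{OPT}^{\mathrm{II}}(\mathbf{x})$: maximize $\sum_{\mathbf{w}\text{ walk on }G_{\mathbf{x}}}\mu_{\mathbf{w}}$ subject to $\sum_{\mathbf{w}\text{ walk on }G_{\mathbf{x}}}w_{ij}\mu_{\mathbf{w}}\le x_{ij}$ for all $ij\in E_{\mathbf{x}}$, and $\mu_{\mathbf{w}}\ge0$. *)

From HB Require Import structures.
From mathcomp Require Import all_boot all_order all_algebra.
From mathcomp Require Import boolp.
Set Implicit Arguments. Unset Strict Implicit. Unset Printing Implicit Defensive.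
Import Order.TTheory GRing.Theory Num.Theory.
Local Open Scope ring_scope.

(* Nodes of K_n are 'I_n; edges are the 2-element subsets of 'I_n. *)
Definition edge (n : nat) := {e : {set 'I_n} | #|e| == 2}.

Section SEP.
Variables (R : realFieldType) (n : nat).

Definition delta (S : {set 'I_n}) : {set edge n} :=
  [set e : edge n | #|val e :&: S| == 1%N].

Definition in_PSEP (x : edge n -> R) : Prop :=
  [/\ (forall v : 'I_n, \sum_(e in delta [set v]) x e = 2),
      (forall S : {set 'I_n}, (3 <= #|S|)%N -> (#|S| <= n - 3)%N ->
          2 <= \sum_(e in delta S) x e)
    & (forall e, 0 <= x e <= 1)].

Definition is_vertex_PSEP (x : edge n -> R) : Prop :=
  in_PSEP x /\
  forall (y z : edge n -> R) (t : R), in_PSEP y -> in_PSEP z -> 0 < t < 1 ->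
    (forall e, x e = t * y e + (1 - t) * z e) -> forall e, y e = z e.

(* a tour (Hamiltonian cycle of K_n), as its edge set: its characteristic
   vector is t_e = (e \in T) *)
Definition is_tour (T : {set edge n}) : Prop :=
  exists s : seq 'I_n,
    [/\ uniq s, (forall v : 'I_n, v \in s)
      & T = [set e : edge n | [exists v : 'I_n, val e == [set v; next s v]]]].

(* w : E_n -> {0,1,2} is (the characteristic vector of) a walk on G_x:
   a closed walk s_0 s_1 ... s_{m-1} s_0 using only edges of the support
   graph, visiting every node, and traversing each edge exactly w_e times. *)
Definition is_walk (x : edge n -> R) (w : {ffun edge n -> 'I_3}) : Prop :=
  exists s : seq 'I_n,
    [/\ (forall v : 'I_n, v \in s),
        all (fun p : 'I_n * 'I_n =>
               [exists e : edge n, (val e == [set p.1; p.2]) && (0 < x e)])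
            (zip s (rot 1 s))
      & forall e : edge n,
          nat_of_ord (w e) =
          count (fun p : 'I_n * 'I_n => val e == [set p.1; p.2]) (zip s (rot 1 s))].

(* ---- DOPT^+(x) ----
   lambda_{ijk} is encoded as L [set i; j] k (so lambda_{ijk} = lambda_{jik});
   mu_t is encoded as mu T for the tour edge set T. *)
Definition feasible_DOPTplus (x : edge n -> R)
    (L : {set 'I_n} -> 'I_n -> R) (mu : {set edge n} -> R) : Prop :=
  [/\ (forall (e : edge n) (i j : 'I_n), val e = [set i; j] ->
        \sum_(k | k \notin val e) (- L [set i; j] k + L [set i; k] j + L [set j; k] i)
        + \sum_(T | `[< is_tour T >]) (e \in T)%:R * mu T <= x e),
      (forall i j k : 'I_n, i != j -> k != i -> k != j -> 0 <= L [set i; j] k)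
    & (forall T, is_tour T -> 0 <= mu T)].

Definition obj_DOPTplus (mu : {set edge n} -> R) : R :=
  \sum_(T | `[< is_tour T >]) mu T.

Definition opt_DOPTplus (x : edge n -> R) (v : R) : Prop :=
  (exists L mu, feasible_DOPTplus x L mu /\ obj_DOPTplus mu = v) /\
  (forall L mu, feasible_DOPTplus x L mu -> obj_DOPTplus mu <= v).

Definition feasible_DOPTII (x : edge n -> R) (mu : {ffun edge n -> 'I_3} -> R) : Prop :=
  (forall e : edge n, 0 < x e ->
     \sum_(w | `[< is_walk x w >]) (nat_of_ord (w e))%:R * mu w <= x e) /\
  (forall w, is_walk x w -> 0 <= mu w).

Definition obj_DOPTII (x : edge n -> R) (mu : {ffun edge n -> 'I_3} -> R) : R :=
  \sum_(w | `[< is_walk x w >]) mu w.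

Definition opt_DOPTII (x : edge n -> R) (v : R) : Prop :=
  (exists mu, feasible_DOPTII x mu /\ obj_DOPTII x mu = v) /\
  (forall mu, feasible_DOPTII x mu -> obj_DOPTII x mu <= v).

End SEP.

(* Both programs are packing problems.  By LP duality (obtained here from
   Farkas' lemma, proved by Fourier-Motzkin elimination) DOPT^II(x) has an
   optimal mu together with lengths c >= 0 on the edges for which every walk
   has length >= 1 and c . x <= sum mu.  Shortcutting a walk yields a tour,
   and the shortcuts are exactly paid for by unit lambdas, so every solution
   of DOPT^II(x) gives one of DOPT^+(x) with the same value.  Conversely, let
   d be the shortest-path metric of the support graph for c, truncated at 1.
   Concatenating shortest paths along a tour and removing pairs of
   traversals of an edge used at least three times gives a walk, so every
   tour has d-length >= 1; the triangle inequality for d makes the lambda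
   terms nonnegative against d; and d <= c on the support of x.  Hence every
   solution of DOPT^+(x) has value at most d . x <= c . x <= sum mu. *)

From HB Require Import structures.
From mathcomp Require Import all_boot all_order all_algebra.
From mathcomp Require Import boolp zify ring lra.
Set Implicit Arguments. Unset Strict Implicit. Unset Printing Implicit Defensive.
Import Order.TTheory GRing.Theory Num.Theory.
Local Open Scope ring_scope.

(** * Farkas' lemma *)

Section Farkas.
Variables (R : realFieldType) (I : finType).

(* The pair (a, b) stands for the inequality a . y <= b. *)
Definition ineq := ({ffun I -> R} * R)%type.

Definition sat_ineq (y : {ffun I -> R}) (c : ineq) := \sum_i c.1 i * y i <= c.2.

Inductive derivable (J : finType) (cs : J -> ineq) : ineq -> Prop :=
| derivable_ax j : derivable cs (cs j)
| derivable_add c1 c2 :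
    derivable cs c1 -> derivable cs c2 -> derivable cs (c1.1 + c2.1, c1.2 + c2.2)
| derivable_scale t c :
    0 <= t -> derivable cs c -> derivable cs ([ffun i => t * c.1 i], t * c.2)
| derivable_weaken c b : derivable cs c -> c.2 <= b -> derivable cs (c.1, b).

Lemma derivable_trans (J J' : finType) (cs : J -> ineq) (cs' : J' -> ineq) c :
  (forall j, derivable cs (cs' j)) -> derivable cs' c -> derivable cs c.
Proof.
move=> hcs; elim=> {c} [//|c1 c2 _ h1 _ h2|t c t0 _ h|c b _ h hb].
- exact: derivable_add.
- exact: derivable_scale.
- exact: derivable_weaken.
Qed.

Lemma derivable_conic (J : finType) (cs : J -> ineq) c : derivable cs c ->
  exists2 u : J -> R, forall j, 0 <= u j &
    (forall i, c.1 i = \sum_j u j * (cs j).1 i) /\ \sum_j u j * (cs j).2 <= c.2.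
Proof.
elim=> {c} [j|c1 c2 _ [u1 u1_ge0 [e1 l1]] _ [u2 u2_ge0 [e2 l2]]|
            t c t_ge0 _ [u u_ge0 [e l]]|c b _ [u u_ge0 [e l]] hb].
- exists (fun k => (k == j)%:R) => [k|]; first by rewrite ler0n.
  split=> [i|]; rewrite (bigD1 j) //= eqxx mul1r big1 ?addr0 // => k /negbTE ->;
    by rewrite mul0r.
- exists (fun k => u1 k + u2 k) => [k|]; first by rewrite addr_ge0.
  split=> [i|]; first by rewrite ffunE e1 e2 -big_split; apply: eq_bigr => k _; rewrite mulrDl.
  by under eq_bigr do rewrite mulrDl; rewrite big_split lerD.
- exists (fun k => t * u k) => [k|]; first by rewrite mulr_ge0.
  split=> [i|]; first by rewrite ffunE e mulr_sumr; apply: eq_bigr => k _; rewrite mulrA.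
  by under eq_bigr do rewrite -mulrA; rewrite -mulr_sumr ler_wpM2l.
- by exists u => //; split=> //; apply: le_trans hb.
Qed.

Definition feasible (J : finType) (cs : J -> ineq) := exists y, forall j, sat_ineq y (cs j).

Definition refutable (J : finType) (cs : J -> ineq) := exists2 b, b < 0 & derivable cs (0, b).

Lemma feasible_or_refutable_trivial (J : finType) (cs : J -> ineq) :
  (forall j i, (cs j).1 i = 0) -> feasible cs \/ refutable cs.
Proof.
move=> cs0; have [b_ge0|] := boolP [forall j, 0 <= (cs j).2].
  left; exists 0 => j; rewrite /sat_ineq big1 ?(forallP b_ge0) // => i _.
  by rewrite ffunE mulr0.
rewrite negb_forall => /existsP [j]; rewrite -ltNge => bj_lt0.
right; exists (cs j).2 => //.
have -> : 0 = (cs j).1 by apply/ffunP => i; rewrite cs0 ffunE.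
by rewrite -surjective_pairing; apply: derivable_ax.
Qed.

Lemma exists_between (J : finType) (lo up : pred J) (l u : J -> R) :
  (forall q p, lo q -> up p -> l q <= u p) ->
  exists t, (forall q, lo q -> l q <= t) /\ (forall p, up p -> t <= u p).
Proof.
move=> lu; case: (pickP lo) => [q0 lo_q0|no_lo].
  have [q lo_q lq_max] := arg_maxP l lo_q0.
  by exists (l q); split=> // p; apply: lu.
case: (pickP up) => [p0 up_p0|no_up].
  have [p up_p up_min] := arg_minP u up_p0.
  by exists (u p); split=> // q; rewrite no_lo.
by exists 0; split=> [q|p]; rewrite ?no_lo ?no_up.
Qed.

(* Fourier-Motzkin elimination of the variable [i0]: every pair of
   inequalities is combined so that the coefficient of [i0] cancels, the
   inequalities with coefficient 0 at [i0] being kept (pairs (p, p)). *)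
Section Elimination.
Variables (J : finType) (cs : J -> ineq) (i0 : I).

Let a j := (cs j).1 i0.

Definition elim_wt1 (p q : J) : R :=
  if (0 < a p) && (a q < 0) then - a q else (a p == 0)%:R.

Definition elim_wt2 (p q : J) : R := if (0 < a p) && (a q < 0) then a p else 0.

Definition elim_sys (pq : J * J) : ineq :=
  let: (p, q) := pq in
  ([ffun i => elim_wt1 p q * (cs p).1 i + elim_wt2 p q * (cs q).1 i],
   elim_wt1 p q * (cs p).2 + elim_wt2 p q * (cs q).2).

Lemma elim_sys_derivable pq : derivable cs (elim_sys pq).
Proof.
case: pq => p q.
have wt1_ge0 : 0 <= elim_wt1 p q.
  by rewrite /elim_wt1; case: ifP => [/andP [_ /ltW]|_]; rewrite ?oppr_ge0 ?ler0n.
have wt2_ge0 : 0 <= elim_wt2 p q.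
  by rewrite /elim_wt2; case: ifP => [/andP [/ltW]|_].
have := derivable_add (derivable_scale wt1_ge0 (derivable_ax cs p))
                      (derivable_scale wt2_ge0 (derivable_ax cs q)).
by congr derivable; congr pair; apply/ffunP => i; rewrite !ffunE.
Qed.

Lemma elim_sys_supp (S : {set I}) :
  (forall j i, i \notin S -> (cs j).1 i = 0) ->
  forall pq i, i \notin S :\ i0 -> (elim_sys pq).1 i = 0.
Proof.
move=> supp [p q] i; rewrite in_setD1 negb_and negbK ffunE => /orP [/eqP ->|iS].
  rewrite /elim_wt1 /elim_wt2 /a; case: ifP => _; first ring.
  by case: eqP => [->|_]; rewrite ?mulr0 !mul0r addr0.
by rewrite (supp p) // (supp q) // !mulr0 addr0.
Qed.

Lemma elim_sys_feasible : feasible elim_sys -> feasible cs.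
Proof.
move=> [y ys].
pose r j := \sum_i (cs j).1 i * y i - a j * y i0.
pose bnd j := ((cs j).2 - r j) / a j.
have bndK j : a j != 0 -> (cs j).2 - r j = a j * bnd j by move=> aj; rewrite mulrC divfK.
have sum_r j : \sum_i (cs j).1 i * y i = r j + a j * y i0 by rewrite subrK.
have [t [lo_t t_up]] :
    exists t, (forall q, a q < 0 -> bnd q <= t) /\ (forall p, 0 < a p -> t <= bnd p).
  apply: exists_between => q p aq_lt0 ap_gt0.
  have := ys (p, q); rewrite /sat_ineq /= /elim_wt1 /elim_wt2 ap_gt0 aq_lt0 /=.
  under eq_bigr do rewrite ffunE mulrDl -!mulrA.
  rewrite big_split /= -!mulr_sumr !sum_r => comb.
  have : 0 <= (a p * - a q) * (bnd p - bnd q).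
    have -> : (a p * - a q) * (bnd p - bnd q) = - a q * (a p * bnd p) + a p * (a q * bnd q).
      by ring.
    rewrite -(bndK p) ?gt_eqF // -(bndK q) ?lt_eqF //.
    by move: comb; lra.
  by rewrite pmulr_rge0 ?subr_ge0 // mulr_gt0 // oppr_gt0.
exists [ffun i => if i == i0 then t else y i] => j; rewrite /sat_ineq.
have -> : \sum_i (cs j).1 i * [ffun i => if i == i0 then t else y i] i = r j + a j * t.
  rewrite (bigD1 i0) //= ffunE eqxx /r (bigD1 i0 (P := predT)) //=.
  rewrite (eq_bigr (fun i => (cs j).1 i * y i)) => [|i /negbTE ne_i]; first by rewrite /a; ring.
  by rewrite ffunE ne_i.
rewrite -lerBrDl.
case: (ltgtP (a j) 0) => aj.
- by rewrite bndK ?lt_eqF //; apply: ler_wnM2l; [exact: ltW | exact: lo_t].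
- by rewrite bndK ?gt_eqF //; apply: ler_wpM2l; [exact: ltW | exact: t_up].
- have := ys (j, j); rewrite /sat_ineq /= /elim_wt1 /elim_wt2 aj ltxx eqxx /=.
  under eq_bigr do rewrite ffunE mul0r addr0 mul1r.
  by rewrite sum_r aj !mul0r mul1r !addr0 subr_ge0.
Qed.

End Elimination.

Lemma feasible_or_refutable (J : finType) (cs : J -> ineq) : feasible cs \/ refutable cs.
Proof.
suff fm k (J' : finType) (cs' : J' -> ineq) (S : {set I}) : (#|S| <= k)%N ->
    (forall j i, i \notin S -> (cs' j).1 i = 0) -> feasible cs' \/ refutable cs'.
  by apply: (fm #|I| _ _ [set: I]) => [|j i]; rewrite ?cardsT ?in_setT.
elim: k J' cs' S => [|k IH] J' cs' S S_le supp.
  apply: feasible_or_refutable_trivial => j i; apply: supp.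
  by move: S_le; rewrite leqn0 cards_eq0 => /eqP ->; rewrite in_set0.
have [S0|[i0 i0S]] := set_0Vmem S.
  by apply: feasible_or_refutable_trivial => j i; apply: supp; rewrite S0 in_set0.
have S'_le : (#|S :\ i0| <= k)%N by move: S_le; rewrite (cardsD1 i0 S) i0S.
case: (IH _ _ _ S'_le (elim_sys_supp (i0 := i0) supp)) => [fe|[b b_lt0 der]].
  by left; apply: (elim_sys_feasible (i0 := i0)).
by right; exists b => //; apply: derivable_trans der => pq; apply: elim_sys_derivable.
Qed.

Theorem farkas (J : finType) (cs : J -> ineq) :
  feasible cs \/ exists2 u : J -> R, forall j, 0 <= u j &
    (forall i, \sum_j u j * (cs j).1 i = 0) /\ \sum_j u j * (cs j).2 < 0.
Proof.
have [|[b b_lt0 /derivable_conic [u u_ge0 [u0 ub]]]] := feasible_or_refutable cs.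
  by left.
right; exists u => //; split=> [i|]; first by rewrite -u0 ffunE.
exact: le_lt_trans ub b_lt0.
Qed.

Definition sign_ineq (i : I) : ineq := ([ffun k => - (k == i)%:R], 0).

Lemma sat_sign_ineq y i : sat_ineq y (sign_ineq i) = (0 <= y i).
Proof.
rewrite /sat_ineq (bigD1 i) //= big1 => [|k /negbTE ki]; last by rewrite ffunE ki oppr0 mul0r.
by rewrite ffunE eqxx mulN1r addr0 oppr_le0.
Qed.

Theorem farkas_nonneg (J : finType) (cs : J -> ineq) :
  (exists2 y : {ffun I -> R}, forall i, 0 <= y i & forall j, sat_ineq y (cs j)) \/
  exists2 u : J -> R, forall j, 0 <= u j &
    (forall i, 0 <= \sum_j u j * (cs j).1 i) /\ \sum_j u j * (cs j).2 < 0.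
Proof.
pose cs' (j : (J + I)%type) := match j with inl j => cs j | inr i => sign_ineq i end.
have [[y ys]|[u u_ge0 [u_coef u_rhs]]] := farkas cs'.
  left; exists y => [i|j]; last exact: (ys (inl j)).
  by rewrite -sat_sign_ineq; apply: (ys (inr i)).
right; exists (fun j => u (inl j)) => //; split=> [i|].
  have sign_coef : \sum_k u (inr k) * (sign_ineq k).1 i = - u (inr i).
    rewrite (bigD1 i) //= ffunE eqxx big1 ?mulrN1 ?addr0 // => k /negbTE ki.
    by rewrite ffunE eq_sym ki oppr0 mulr0.
  have := u_coef i; rewrite big_sumType sign_coef => /eqP; rewrite subr_eq0 => /eqP ->.
  exact: u_ge0.
by move: u_rhs; rewrite big_sumType /= [X in _ + X]big1 ?addr0 // => k _; rewrite mulr0.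
Qed.

End Farkas.

(** * Duality for packing programs *)

Section PackingDuality.
Variables (R : realFieldType) (W E : finType) (P : pred W) (A : W -> E -> R) (x : E -> R).
Hypotheses (A_ge0 : forall w e, 0 <= A w e) (x_ge0 : forall e, 0 <= x e).
Hypothesis A_col : forall w, P w -> exists e, 0 < A w e.

Lemma packing_certificate_bound (ue : E -> R) (uw : W -> R) (t : R) :
  (forall e, 0 <= ue e) -> (forall w, 0 <= uw w) -> 0 <= t ->
  (forall w, P w -> t <= \sum_e ue e * A w e) ->
  (forall e, \sum_(w | P w) uw w * A w e <= t * x e) ->
  \sum_(w | P w) uw w <= \sum_e ue e * x e.
Proof.
move=> ue_ge0 uw_ge0 t_ge0 col row.
have [t_gt0|t0] := boolP (0 < t); last first.
  have {}t0 : t = 0 by apply/eqP; rewrite eq_le t_ge0 andbT leNgt.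
  rewrite big1 => [|w Pw]; first by apply: sumr_ge0 => e _; rewrite mulr_ge0.
  have [e Awe_gt0] := A_col Pw.
  apply/eqP; rewrite eq_le uw_ge0 andbT -(pmulr_lle0 _ Awe_gt0).
  have := row e; rewrite t0 mul0r; apply: le_trans; rewrite (bigD1 w) //= lerDl.
  by apply: sumr_ge0 => w' _; rewrite mulr_ge0.
rewrite -(ler_pM2l t_gt0) mulr_sumr.
apply: (@le_trans _ _ (\sum_(w | P w) uw w * \sum_e ue e * A w e)).
  by apply: ler_sum => w Pw; rewrite mulrC ler_wpM2l // col.
under eq_bigr do rewrite mulr_sumr.
rewrite exchange_big mulr_sumr /=; apply: ler_sum => e _.
under eq_bigr do rewrite mulrCA.
by rewrite -mulr_sumr mulrCA ler_wpM2l.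
Qed.

Lemma sum_if_mulr (T : finType) (Q : pred T) (F G : T -> R) :
  \sum_i (if Q i then F i else 0) * G i = \sum_(i | Q i) F i * G i.
Proof. by rewrite [RHS]big_mkcond; apply: eq_bigr => i _; case: (Q i); rewrite ?mul0r. Qed.

Lemma sum_mulr_if (T : finType) (Q : pred T) (F G : T -> R) :
  \sum_i G i * (if Q i then F i else 0) = \sum_(i | Q i) G i * F i.
Proof. by rewrite [RHS]big_mkcond; apply: eq_bigr => i _; case: (Q i); rewrite ?mulr0. Qed.

Lemma sum_mulr0 (T : finType) (F : T -> R) : \sum_i F i * 0 = 0.
Proof. by rewrite big1 // => i _; rewrite mulr0. Qed.

Lemma sum_mul0r (T : finType) (F : T -> R) : \sum_i 0 * F i = 0.
Proof. by rewrite big1 // => i _; rewrite mul0r. Qed.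

(* Unknowns: (mu_w)_w and (c_e)_e, all nonnegative.  Constraints, indexed by
   E + W + 'I_1: the packing constraints on mu, the covering constraints
   on c, and c . x <= sum mu. *)
Definition packing_coef (j : (E + W + 'I_1)%type) (i : (W + E)%type) : R :=
  match j, i with
  | inl (inl e), inl w => if P w then A w e else 0
  | inl (inr w'), inr e => if P w' then - A w' e else 0
  | inr _, inl w => if P w then -1 else 0
  | inr _, inr e => x e
  | _, _ => 0
  end.

Definition packing_rhs (j : (E + W + 'I_1)%type) : R :=
  match j with
  | inl (inl e) => x e
  | inl (inr w) => if P w then -1 else 0
  | inr _ => 0
  end.

Definition packing_sys j : ineq R (W + E)%type := ([ffun i => packing_coef j i], packing_rhs j).

Lemma sat_packing_sys y j : sat_ineq y (packing_sys j) =
  (\sum_w packing_coef j (inl w) * y (inl w) + \sum_e packing_coef j (inr e) * y (inr e)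
   <= packing_rhs j).
Proof.
rewrite /sat_ineq big_sumType /=.
by under eq_bigr do rewrite ffunE; under [X in _ + X]eq_bigr do rewrite ffunE.
Qed.

Lemma packing_sys_comb (u : (E + W + 'I_1)%type -> R) i :
  \sum_j u j * (packing_sys j).1 i =
  \sum_e u (inl (inl e)) * packing_coef (inl (inl e)) i +
  \sum_w u (inl (inr w)) * packing_coef (inl (inr w)) i + u (inr ord0) * packing_coef (inr ord0) i.
Proof.
rewrite !big_sumType big_ord1 /= ffunE; under eq_bigr do rewrite ffunE.
by under [X in _ + X + _]eq_bigr do rewrite ffunE.
Qed.

Lemma packing_duality : exists (mu : W -> R) (c : E -> R),
  [/\ forall w, 0 <= mu w, forall e, \sum_(w | P w) A w e * mu w <= x e,
      forall e, 0 <= c e, forall w, P w -> 1 <= \sum_e A w e * c e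
    & \sum_e c e * x e <= \sum_(w | P w) mu w].
Proof.
have [[y y_ge0 ys]|[u u_ge0 [u_coef u_rhs]]] := farkas_nonneg packing_sys.
  exists (fun w => y (inl w)), (fun e => y (inr e)); split=> // [e|w Pw|].
  - by have := ys (inl (inl e)); rewrite sat_packing_sys /= sum_mul0r sum_if_mulr addr0.
  - have := ys (inl (inr w)); rewrite sat_packing_sys /= sum_mul0r Pw add0r.
    by under eq_bigr do rewrite mulNr; rewrite sumrN lerN2.
  - have := ys (inr ord0); rewrite sat_packing_sys /= sum_if_mulr.
    rewrite (eq_bigr (fun w => - y (inl w))) => [|w _]; last by rewrite mulN1r.
    by rewrite sumrN addrC subr_le0; under eq_bigr do rewrite mulrC.
exfalso; move: u_rhs; apply/negP; rewrite -leNgt.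
pose ue e := u (inl (inl e)); pose uw w := u (inl (inr w)); pose t := u (inr ord0).
have col w : P w -> t <= \sum_e ue e * A w e.
  move=> Pw; have := u_coef (inl w).
  by rewrite packing_sys_comb /= Pw sum_mulr0 addr0 mulrN1 subr_ge0.
have row e : \sum_(w | P w) uw w * A w e <= t * x e.
  have := u_coef (inr e); rewrite packing_sys_comb /= sum_mulr0 add0r sum_mulr_if.
  rewrite (eq_bigr (fun w => - (uw w * A w e))) => [|w _]; last by rewrite mulrN.
  by rewrite sumrN addrC subr_ge0.
have := packing_certificate_bound (fun e => u_ge0 _) (fun w => u_ge0 _) (u_ge0 _) col row.
rewrite !big_sumType big_ord1 /= mulr0 addr0 sum_mulr_if => bound.
rewrite (eq_bigr (fun w => - uw w)) => [|w _]; last by rewrite mulrN1.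
by rewrite sumrN subr_ge0.
Qed.

End PackingDuality.

(** * Closed walks *)

Section Steps.
Variable T : eqType.

Definition steps (u : T) (r : seq T) := zip (u :: r) r.

Definition swap_inv (P : pred (T * T)) := forall p : T * T, P (p.2, p.1) = P p.

Lemma steps_cons u v r : steps u (v :: r) = (u, v) :: steps v r.
Proof. by []. Qed.

Lemma steps_cat u r1 r2 : steps u (r1 ++ r2) = steps u r1 ++ steps (last u r1) r2.
Proof. by elim: r1 u => [|v r1 IH] u //=; rewrite !steps_cons IH. Qed.

Lemma zip_rcons_steps h s c : zip (h :: s) (rcons s c) = steps h (rcons s c).
Proof. by elim: s h => [|v s IH] h //=; rewrite IH. Qed.

Lemma zip_rot1_steps u s : zip (u :: s) (rot 1 (u :: s)) = steps u (rcons s u).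
Proof. by rewrite rot1_cons zip_rcons_steps. Qed.

Lemma last_rev_belast (u : T) r : last (last u r) (rev (belast u r)) = u.
Proof. by case: r => [|w r] //=; rewrite rev_cons last_rcons. Qed.

Lemma steps_rev u r :
  steps (last u r) (rev (belast u r)) = rev (map (fun p : T * T => (p.2, p.1)) (steps u r)).
Proof.
elim: r u => [|v r IH] u //=.
by rewrite rev_cons -cats1 steps_cat IH last_rev_belast steps_cons /= rev_cons cats1.
Qed.

Lemma count_rev_swap (P : pred (T * T)) ps : swap_inv P ->
  count P (rev (map (fun p : T * T => (p.2, p.1)) ps)) = count P ps.
Proof.
by move=> Pswap; rewrite count_rev count_map; apply: eq_count => p /=; rewrite /preim Pswap.
Qed.

Lemma steps_split u r a b : (a, b) \in steps u r ->
  exists r1 r2, r = r1 ++ b :: r2 /\ last u r1 = a.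
Proof.
elim: r u => [|v r IH] u //=.
rewrite steps_cons in_cons => /orP [/eqP [-> ->] | /IH [r1 [r2 [-> <-]]]].
  by exists [::], r.
by exists (v :: r1), r2.
Qed.

Lemma mem_steps u r p : p \in steps u r -> p.1 \in u :: r /\ p.2 \in r.
Proof.
case: p => a b /steps_split [r1 [r2 [-> <-]]]; split=> /=.
  by have := mem_last u r1; rewrite !inE mem_cat => /orP [->|->]; rewrite ?orbT.
by rewrite mem_cat in_cons eqxx orbT.
Qed.

Lemma mem_steps2 (u v : T) r : v \in r -> exists2 p, p \in steps u r & p.2 = v.
Proof.
case/splitPr => r1 r2; exists (last u r1, v) => //.
by rewrite steps_cat steps_cons mem_cat mem_head orbT.
Qed.

Lemma mem_last_nonnil (a : T) r : r != [::] -> last a r \in r.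
Proof. by case: r => [|c r] //= _; apply: mem_last. Qed.

Lemma mem_last_neq (a b : T) r : last b r = a -> a != b -> a \in r.
Proof.
move=> <-; case: r => [|c r] /=; first by rewrite eqxx.
by rewrite mem_last.
Qed.

Lemma rot_closed_walk u r1 r2 : last u (r1 ++ r2) = u ->
  let z := last u r1 in
  [/\ last z (r2 ++ r1) = z, perm_eq (steps u (r1 ++ r2)) (steps z (r2 ++ r1))
    & perm_eq (r1 ++ r2) (r2 ++ r1)].
Proof.
move=> closed z; rewrite last_cat in closed.
split; first by rewrite last_cat closed.
  by rewrite !steps_cat closed perm_catC.
by rewrite perm_catC.
Qed.

Lemma not_uniq_split (s : seq T) : ~~ uniq s -> exists r1 k r2, s = r1 ++ k :: r2 /\ k \in r2.
Proof.
elim: s => [|v s IH] //=; rewrite negb_and negbK => /orP [vs | /IH [r1 [k [r2 [-> kr2]]]]].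
  by exists [::], v, s.
by exists (v :: r1), k, r2.
Qed.

Lemma rot_closed_walk_repeat (u : T) r : last u r = u -> ~~ uniq r ->
  exists a k b r0, [/\ last b r0 = a, k \in b :: r0,
    perm_eq (steps u r) (steps a [:: k, b & r0]), perm_eq r [:: k, b & r0]
    & size r = (size r0).+2].
Proof.
move=> ru /not_uniq_split [r1 [k [r2 [def_r kr2]]]].
have /rot_closed_walk [] : last u (r1 ++ k :: r2) = u by rewrite -def_r.
case def_r0 : (r2 ++ r1) => [|b r0]; first by move: (mem_cat k r2 r1); rewrite def_r0 kr2.
move=> r0a psteps pr; exists (last u r1), k, b, r0; rewrite def_r; split.
- by move: r0a; rewrite /= def_r0.
- by rewrite -def_r0 mem_cat kr2.
- by move: psteps; rewrite /= def_r0.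
- by move: pr; rewrite /= def_r0.
- by move: (congr1 size def_r0); rewrite !size_cat /=; lia.
Qed.

Lemma next_at_in (v y0 y : T) s : v \in y :: s ->
  (v, next_at v y0 y s) \in zip (y :: s) (rcons s y0).
Proof.
elim: s y => [|z s IH] y /=; first by rewrite inE => /eqP ->; rewrite eqxx inE.
have [-> _|vy] := eqVneq v y; first exact: mem_head.
by rewrite in_cons (negbTE vy) /= => /IH vs; rewrite in_cons vs orbT.
Qed.

Lemma next_in_steps (u : T) r v : last u r = u -> v \in r -> (v, next r v) \in steps u r.
Proof.
case: r => [|y s] //= closed vs; rewrite steps_cons in_cons.
have := next_at_in y vs; rewrite zip_rcons_steps -cats1 steps_cat mem_cat closed /=.
by case/orP => [->|]; rewrite ?orbT // inE => ->.
Qed.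

Lemma in_zip1 (p : T * T) s t : p \in zip s t -> p.1 \in s.
Proof.
elim: s t => [|a s IH] [|b t] //=; rewrite in_cons => /orP [/eqP -> | /IH pt].
  exact: mem_head.
by rewrite pt orbT.
Qed.

Lemma zip_next_at (y y0 : T) s p : uniq (y :: s) -> p \in zip (y :: s) (rcons s y0) ->
  p.2 = next_at p.1 y0 y s.
Proof.
elim: s y => [|z s IH] y /=; first by move=> _; rewrite inE => /eqP -> /=; rewrite eqxx.
move=> /andP [ys us]; rewrite in_cons => /orP [/eqP -> /=|pzs]; first by rewrite eqxx.
have /negbTE -> : p.1 != y by apply: contraNneq ys => <-; apply: in_zip1 pzs.
exact: IH.
Qed.

Lemma zip_next (s : seq T) p : uniq s -> p \in zip s (rot 1 s) -> p.2 = next s p.1.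
Proof. by case: s => [|y s] //= us; rewrite rot1_cons; apply: zip_next_at. Qed.

Lemma next_next_neq (s : seq T) v : uniq s -> (2 < size s)%N -> v \in s ->
  next s v != v /\ next s (next s v) != v.
Proof.
move=> us s3 vs; case: (rot_to vs) => i s' def_s.
have us' : uniq (v :: s') by rewrite -def_s rot_uniq.
have s3' : (2 < size (v :: s'))%N by rewrite -def_s size_rot.
rewrite -!(next_rot i us) def_s.
case: s' us' s3' {def_s} => [|b [|c s'']] //= us' _; rewrite eqxx.
move: us'; rewrite !inE !negb_or => /andP [/and3P [vb vc _] /andP [/andP [bc _] _]].
by rewrite (eq_sym b v) (negbTE vb) eqxx; split=> //; rewrite eq_sym.
Qed.

Lemma shorten_path (r : seq T) (u : T) : exists r', [/\ last u r' = last u r, uniq (u :: r'),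
  subseq (steps u r') (steps u r) & {subset r' <= r}].
Proof.
move: {2}(size r) (leqnn (size r)) => m; elim: m r u => [|m IH] r u.
  by rewrite leqn0 => /nilP ->; exists [::].
have [/splitPr [r1 r2]|ur] := boolP (u \in r).
  rewrite size_cat /= => size_r.
  have [|r' [r'u ur' sub' mem']] := IH r2 u; first by lia.
  exists r'; split=> //; first by rewrite r'u last_cat.
    rewrite steps_cat steps_cons; apply: subseq_trans sub' _.
    exact: subseq_trans (subseq_cons _ (last u r1, u)) (suffix_subseq _ _).
  by move=> z /mem' zr2; rewrite mem_cat in_cons zr2 !orbT.
case: r ur => [|v r0] ur size_r; first by exists [::].
have [r' [r'u ur' sub' mem']] := IH r0 v size_r.
exists (v :: r'); split=> //.
- rewrite cons_uniq ur' andbT; apply: contra ur; rewrite !in_cons => /orP [->//|/mem' ->].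
  by rewrite orbT.
- by rewrite !steps_cons /= eqxx.
- by move=> z; rewrite !in_cons => /orP [->//|/mem' ->]; rewrite orbT.
Qed.

End Steps.

Ltac or_mem := let h := fresh in move=> h; repeat (case/orP: h => h); rewrite ?h ?orbT //.

Section Splice.
Variable T : eqType.

Definition improves (a : T) W (u' : T) W' :=
  [/\ last u' W' = u', {subset W <= W'}, (size W' < size W)%N &
      forall P, swap_inv P -> (count P (steps u' W') <= count P (steps a W))%N].

(* a -> b, a loop at b, b -> a, ..., b, ..., a: drop the back-and-forth a-b-a. *)
Lemma splice_back_forth (a b : T) R1 R3 R4 : a != b -> last b R1 = b -> last b R4 = a ->
  improves a (b :: R1 ++ a :: R3 ++ b :: R4) a (R3 ++ b :: R1 ++ R4).
Proof.
move=> ab R1b R4a; split=> [|||P _].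
- by rewrite last_cat /= last_cat R1b.
- have aR4 : a \in R4 by apply: mem_last_neq R4a ab.
  move=> v; rewrite !(in_cons, mem_cat).
  by have [->|_] := eqVneq v a; [rewrite aR4 !orbT | or_mem].
- by rewrite /=; repeat rewrite size_cat /=; lia.
- by do 5 (rewrite ?steps_cat ?steps_cons ?count_cat ?R1b /=); lia.
Qed.

(* a -> b, ..., a, ..., b -> a, a loop at a: drop the back-and-forth. *)
Lemma splice_forth_back (a b : T) R3 R4 R2 : a != b -> last a R4 = b -> last a R2 = a ->
  improves a (b :: (R3 ++ a :: R4) ++ a :: R2) b (R3 ++ a :: R2 ++ R4).
Proof.
move=> ab R4b R2a; split=> [|||P _].
- by rewrite last_cat /= last_cat R2a.
- have bR4 : b \in R4 by apply: mem_last_neq R4b _; rewrite eq_sym.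
  move=> v; rewrite !(in_cons, mem_cat).
  by have [->|_] := eqVneq v b; [rewrite bR4 !orbT | or_mem].
- by rewrite /=; repeat rewrite size_cat /=; lia.
- by rewrite -catA; do 5 (rewrite ?steps_cat ?steps_cons ?count_cat ?R4b ?R2a /=); lia.
Qed.

(* Three traversals a -> b: the middle excursion from b back to a is walked
   backwards, which removes two of them. *)
Lemma splice_parallel (a b : T) X1 X2 X3 :
  a != b -> last b X1 = a -> last b X2 = a -> last b X3 = a ->
  improves a (b :: X1 ++ b :: X2 ++ b :: X3) a (b :: X1 ++ rev (belast b X2) ++ X3).
Proof.
move=> ab X1a X2a X3a.
have revX2b : last a (rev (belast b X2)) = b by rewrite -{1}X2a last_rev_belast.
split=> [|||P Pswap].
- by rewrite /= !last_cat X1a revX2b X3a.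
- have aX1 : a \in X1 by apply: mem_last_neq X1a ab.
  have X2_rev v : v \in X2 -> v \in rev (belast b X2) \/ v = a.
    move=> vX2; have : v \in b :: X2 by rewrite in_cons vX2 orbT.
    by rewrite lastI mem_rcons in_cons X2a mem_rev => /orP [/eqP ->|->]; [right|left].
  move=> v; rewrite !(in_cons, mem_cat).
  have [->|_] := eqVneq v a; first by rewrite aX1 !orbT.
  have [/X2_rev [->|->]|_] := boolP (v \in X2); rewrite ?aX1 ?orbT //.
  or_mem.
- by rewrite /=; repeat rewrite size_cat /=; rewrite size_rev size_belast; lia.
- have revX2 : steps a (rev (belast b X2)) = rev (map (fun p : T * T => (p.2, p.1)) (steps b X2)).
    by rewrite -steps_rev X2a.
  do 5 (rewrite ?steps_cat ?steps_cons ?count_cat ?X1a ?X2a ?revX2b ?revX2 /=).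
  by rewrite count_rev_swap //; lia.
Qed.

End Splice.

Ltac case_eqs :=
  repeat (match goal with
  | H : is_true (?x != ?x) |- _ => by rewrite eqxx in H
  | |- context [?x == ?x] => rewrite eqxx
  | H : is_true (?x != ?y) |- context [?x == ?y] => rewrite (negbTE H)
  | H : is_true (?x != ?y) |- context [?y == ?x] => rewrite eq_sym (negbTE H)
  | |- context [?x == ?y] => case: (eqVneq x y) => [?|?]; subst
  end; rewrite /=).

Lemma set2_eqE (T : finType) (x y p q : T) :
  ([set x; y] == [set p; q]) = ((x == p) && (y == q)) || ((x == q) && (y == p)).
Proof.
apply/eqP/idP => [E | /orP [] /andP [/eqP -> /eqP ->] //]; last exact: setUC.
have : x \in [set p; q] by rewrite -E !inE eqxx.
have : y \in [set p; q] by rewrite -E !inE eqxx orbT.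
have : p \in [set x; y] by rewrite E !inE eqxx.
have : q \in [set x; y] by rewrite E !inE eqxx orbT.
by rewrite !inE; case_eqs.
Qed.

Lemma card_set2_neq (T : finType) (a b : T) : #|[set a; b]| == 2 -> a != b.
Proof. by apply: contraTneq => ->; rewrite setUid cards1. Qed.

Section Edges.
Variable n : nat.
Local Notation V := 'I_n.

Definition on_edge (e : edge n) (p : V * V) := val e == [set p.1; p.2].

Definition ecount (e : edge n) (ps : seq (V * V)) := count (on_edge e) ps.

Definition covers (r : seq V) := forall v : V, v \in r.

Lemma swap_inv_on_edge (e : edge n) : swap_inv (on_edge e).
Proof. by move=> [a b]; rewrite /on_edge /= setUC. Qed.

Lemma edge_neq (e : edge n) a b : val e = [set a; b] -> a != b.
Proof. by move=> eab; apply: card_set2_neq; rewrite -eab; apply: (valP e). Qed.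

Lemma exists_edge (a b : V) : a != b -> exists e : edge n, val e = [set a; b].
Proof.
move=> ab; have e_ok : #|[set a; b]| == 2 by rewrite cards2 ab.
by exists (exist _ [set a; b] e_ok).
Qed.

Lemma on_edgeP (e : edge n) (a b : V) (q : V * V) :
  val e = [set a; b] -> on_edge e q -> q = (a, b) \/ q = (b, a).
Proof.
case: q => q1 q2; rewrite /on_edge => -> /=.
by rewrite set2_eqE => /orP [] /andP [/eqP -> /eqP ->]; [left|right].
Qed.

Lemma mem_edge_steps (e : edge n) a b u r q : val e = [set a; b] ->
  q \in steps u r -> on_edge e q -> a \in u :: r /\ b \in u :: r.
Proof.
move=> eab /mem_steps [q1 q2] /(on_edgeP eab) [] def_q; rewrite def_q /= in q1 q2;
  by rewrite ?q1 in_cons q2 orbT.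
Qed.

Lemma ecount_tour_le1 (s : seq V) (e : edge n) : uniq s -> (2 < size s)%N ->
  (ecount e (zip s (rot 1 s)) <= 1)%N.
Proof.
move=> us s3; have /cards2P [a [b [ab eab]]] := valP e.
set ps := zip s (rot 1 s).
have ups : uniq ps.
  by apply: (map_uniq (f := fst)); rewrite -/(unzip1 ps) unzip1_zip // size_rot.
have -> : ecount e ps = count (predU (pred1 (a, b)) (pred1 (b, a))) ps.
  by apply: eq_count => [[p1 p2]]; rewrite /on_edge eab set2_eqE /= !xpair_eqE; case_eqs.
have cntU := count_predUI (pred1 (a, b)) (pred1 (b, a)) ps; rewrite !count_uniq_mem // in cntU.
suff : (((a, b) \in ps) + ((b, a) \in ps) <= 1)%N.
  by rewrite -cntU; apply: leq_trans; apply: leq_addr.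
case abs: ((a, b) \in ps); case bas: ((b, a) \in ps) => //=.
have /= nab := zip_next us abs; have /= nba := zip_next us bas.
by have [_] := next_next_neq us s3 (in_zip1 abs); rewrite /= -nab -nba eqxx.
Qed.

Lemma reduce_antiparallel (a b : V) R1 R2 (e : edge n) :
  val e = [set a; b] -> last b R1 = b -> last a R2 = a ->
  (0 < ecount e (steps b R1) + ecount e (steps a R2))%N ->
  exists u' W', improves a (b :: R1 ++ a :: R2) u' W'.
Proof.
move=> eab R1b R2a cnt; have ab := edge_neq eab.
have [R2e|] := ltnP 0 (ecount e (steps a R2)).
  have /hasP [q qR2 eq] : has (on_edge e) (steps a R2) by rewrite has_count.
  have [_] := mem_edge_steps eab qR2 eq; rewrite in_cons eq_sym (negbTE ab) /= => bR2.
  case/splitPr: bR2 R2a => R3 R4; rewrite last_cat /= => R4a.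
  by exists a, (R3 ++ b :: R1 ++ R4); apply: splice_back_forth.
rewrite leqn0 => /eqP R2e0; move: cnt; rewrite R2e0 addn0 => R1e.
have /hasP [q qR1 eq] : has (on_edge e) (steps b R1) by rewrite has_count.
have [+ _] := mem_edge_steps eab qR1 eq; rewrite in_cons (negbTE ab) /= => aR1.
case/splitPr: aR1 R1b => R3 R4; rewrite last_cat /= => R4b.
by exists b, (R3 ++ a :: R2 ++ R4); apply: splice_forth_back.
Qed.

Lemma reduce_parallel (a b : V) W3 (e : edge n) :
  val e = [set a; b] -> last b W3 = a -> (b, a) \notin steps b W3 ->
  (1 < ecount e (steps b W3))%N -> exists u' W', improves a (b :: W3) u' W'.
Proof.
move=> eab W3a no_ba cnt; have ab := edge_neq eab.
have only_ab q : q \in steps b W3 -> on_edge e q -> q = (a, b).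
  by move=> qW3 /(on_edgeP eab) [//|def_q]; move: no_ba; rewrite -def_q qW3.
have /hasP [q qW3 eq] : has (on_edge e) (steps b W3) by rewrite has_count ltnW.
move: (qW3); rewrite (only_ab q qW3 eq) => /steps_split [R1 [R2 [def_W3 R1a]]].
have R2a : last b R2 = a by move: W3a; rewrite def_W3 last_cat R1a.
have stepsW3 : steps b W3 = steps b R1 ++ (a, b) :: steps b R2.
  by rewrite def_W3 steps_cat R1a steps_cons.
have e_ab : on_edge e (a, b) by rewrite /on_edge eab.
move: cnt; rewrite /ecount stepsW3 count_cat /= e_ab /= => cnt.
have [R2e|R2e0] := ltnP 0 (count (on_edge e) (steps b R2)).
  have /hasP [q' qR2 eq'] : has (on_edge e) (steps b R2) by rewrite has_count.
  have := only_ab q'; rewrite stepsW3 mem_cat in_cons qR2 !orbT => /(_ isT eq') def_q'.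
  move: qR2; rewrite def_q' => /steps_split [R3 [R4 [def_R2 R3a]]].
  have R4a : last b R4 = a by move: R2a; rewrite def_R2 last_cat R3a.
  exists a, (b :: R1 ++ rev (belast b R3) ++ R4).
  by rewrite def_W3 def_R2; apply: splice_parallel.
have /hasP [q' qR1 eq'] : has (on_edge e) (steps b R1) by rewrite has_count; lia.
have := only_ab q'; rewrite stepsW3 mem_cat qR1 => /(_ isT eq') def_q'.
move: qR1; rewrite def_q' => /steps_split [R3 [R4 [def_R1 R3a]]].
have R4a : last b R4 = a by move: R1a; rewrite def_R1 last_cat R3a.
exists a, (b :: R3 ++ rev (belast b R4) ++ R2).
by rewrite def_W3 def_R1 -catA; apply: splice_parallel.
Qed.

Lemma reduce_step (a b : V) W3 (e : edge n) : last a (b :: W3) = a -> val e = [set a; b] ->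
  (2 < ecount e (steps a (b :: W3)))%N -> exists u' W', improves a (b :: W3) u' W'.
Proof.
move=> W3a eab; rewrite /= in W3a; have e_ab : on_edge e (a, b) by rewrite /on_edge eab.
have e_ba : on_edge e (b, a) by rewrite /on_edge eab setUC.
rewrite /ecount steps_cons /= e_ab /= ltnS.
have [ba|no_ba] := boolP ((b, a) \in steps b W3); last exact: reduce_parallel.
move: ba => /steps_split [R1 [R2 [def_W3 R1b]]].
have R2a : last a R2 = a by move: W3a; rewrite def_W3 last_cat R1b.
rewrite def_W3 steps_cat R1b steps_cons count_cat /= e_ba /= => cnt.
by apply: (reduce_antiparallel eab R1b R2a); rewrite /ecount; lia.
Qed.

Lemma reduce_walk (u : V) W : last u W = u -> covers W ->
  exists u' W', [/\ last u' W' = u', covers W', (forall e, ecount e (steps u' W') <= 2)%N &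
      forall P, swap_inv P -> (count P (steps u' W') <= count P (steps u W))%N].
Proof.
move: {2}(size W) (leqnn (size W)) => m; elim: m u W => [|m IH] u W.
  by rewrite leqn0 => /nilP -> _ /(_ u).
move=> sizeW Wu covW.
have [small|] := boolP [forall e, ecount e (steps u W) <= 2]%N.
  by exists u, W; split=> // e; apply: (forallP small).
rewrite negb_forall => /existsP [e]; rewrite -ltnNge => big_e.
have /hasP [[a b] ab eab] : has (on_edge e) (steps u W).
  by rewrite has_count (ltn_trans _ big_e).
have [W1 [W2 [def_W W1a]]] := steps_split ab.
move: Wu; rewrite def_W => /rot_closed_walk [rotW psteps pW]; rewrite W1a /= in rotW psteps pW.
have [u1 [W' [W'u1 subW' ltW' cntW']]] : exists u' W', improves a (b :: W2 ++ W1) u' W'.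
  have eab' : val e = [set a; b] by apply/eqP.
  apply: (reduce_step rotW eab').
  by move: big_e; rewrite /ecount def_W (permP psteps).
have covW' : covers W' by move=> v; apply: subW'; rewrite -(perm_mem pW) -def_W.
have [|u2 [W'' [W''u2 covW'' small cntW'']]] := IH u1 W' _ W'u1 covW'.
  by move: ltW' sizeW; rewrite def_W /= !size_cat /=; lia.
exists u2, W''; split=> // P Pswap.
apply: leq_trans (cntW'' P Pswap) _; apply: leq_trans (cntW' P Pswap) _.
by rewrite (permP psteps).
Qed.

Section Shortcut.
Variable R : realFieldType.

Definition proper_step (p : V * V) := p.1 != p.2.

Definition proper_triple (t : V * V * V) := [&& t.1.1 != t.1.2, t.1.1 != t.2 & t.1.2 != t.2].

(* Replacing a -> k -> b by a -> b changes the edge counts by the negative of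
   [shortcut_vec (a, b, k)]. *)
Definition shortcut_vec (t : V * V * V) (e : edge n) : R :=
  (val e == [set t.1.1; t.2])%:R + (val e == [set t.1.2; t.2])%:R
  - (val e == [set t.1.1; t.1.2])%:R.

Lemma shortcut_walk (u : V) r : last u r = u -> covers r -> all proper_step (steps u r) ->
  exists u' r' tl, [/\ last u' r' = u', covers r', uniq r', all proper_triple tl &
   forall e, (ecount e (steps u' r'))%:R + \sum_(t <- tl) shortcut_vec t e
             <= (ecount e (steps u r))%:R].
Proof.
move: {2}(size r) (leqnn (size r)) => m; elim: m u r => [|m IH] u r.
  by rewrite leqn0 => /nilP -> _ /(_ u).
move=> sizer ru covr proper_r.
have [ur|] := boolP (uniq r); first by exists u, r, [::]; split=> // e; rewrite big_nil addr0.
case/(rot_closed_walk_repeat ru) => a [k [b [r0 [r0a kbr0 psteps pr size_r]]]].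
have cov_r0 : covers [:: k, b & r0] by move=> v; rewrite -(perm_mem pr).
have cnt_r e : ecount e (steps u r) = ecount e (steps a [:: k, b & r0]) by apply/permP.
have size_r0 : (size (b :: r0) <= m)%N by move: sizer; rewrite size_r.
move: proper_r; rewrite (perm_all _ psteps) !steps_cons /= => /and3P [ak kb proper_r0].
rewrite /proper_step /= in ak kb.
have [ab|ab] := eqVneq a b.
- rewrite -ab in kb proper_r0 cov_r0 r0a cnt_r kbr0 size_r0.
  have cov_r0' : covers r0.
    have kr0 : k \in r0 by move: kbr0; rewrite in_cons eq_sym (negbTE ak).
    move=> v; move: (cov_r0 v); rewrite !inE => /or3P [/eqP ->|/eqP ->|//] //.
    by rewrite -{1}r0a mem_last_nonnil //; apply: contraTneq kr0 => ->.
  have [u' [r' [tl [r'u' covr' ur' proper_tl cnt']]]] :=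
    IH a r0 (ltnW size_r0) r0a cov_r0' proper_r0.
  exists u', r', tl; split=> // e; apply: le_trans (cnt' e) _.
  by rewrite ler_nat cnt_r /ecount !steps_cons /= addnA leq_addl.
- have cov_br0 : covers (b :: r0).
    by move=> v; move: (cov_r0 v); rewrite in_cons => /orP [/eqP ->|].
  have proper_br0 : all proper_step (steps a (b :: r0)) by rewrite steps_cons /= proper_r0 andbT.
  have [u' [r' [tl [r'u' covr' ur' proper_tl cnt']]]] :=
    IH a (b :: r0) size_r0 r0a cov_br0 proper_br0.
  exists u', r', ((a, b, k) :: tl); split=> //.
    by rewrite /= proper_tl andbT /proper_triple /= ab ak eq_sym kb.
  move=> e; rewrite big_cons cnt_r addrCA.
  have -> : (ecount e (steps a [:: k, b & r0]))%:R =
            (ecount e (steps a (b :: r0)))%:R + shortcut_vec (a, b, k) e :> R.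
    rewrite /ecount !steps_cons /= /shortcut_vec /on_edge /= !natrD.
    by rewrite (setUC [set k] [set b]); ring.
  by rewrite addrC lerD2r.
Qed.

End Shortcut.

End Edges.

Arguments proper_step {n} p.
Arguments proper_triple {n} t.

(** * The truncated shortest-path metric *)

Lemma bigmin_lt_id (R : realDomainType) (T : finType) (P : pred T) (F : T -> R) (x : R) :
  \big[Num.min/x]_(i | P i) F i < x -> exists2 i, P i & \big[Num.min/x]_(i | P i) F i = F i.
Proof.
apply: (big_rec (fun m => m < x -> exists2 i, P i & m = F i)); first by rewrite ltxx.
by move=> i m Pi IHm; have [_ _|_ /IHm] := leP (F i) m; first exists i.
Qed.

Lemma size_uniq_lt_card (T : finType) (u : T) r : uniq (u :: r) -> (size r < #|T|)%N.
Proof. by move=> ur; have := max_card (mem (u :: r)); rewrite (card_uniqP ur). Qed.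

Section Metric.
Variables (R : realFieldType) (n : nat) (x c : edge n -> R).
Hypothesis c_ge0 : forall e, 0 <= c e.
Local Notation V := 'I_n.

Definition supp_step (p : V * V) := [exists e, on_edge e p && (0 < x e)].

Definition walk_cost (ps : seq (V * V)) : R := \sum_e (ecount e ps)%:R * c e.

Lemma swap_inv_supp_step : swap_inv supp_step.
Proof. by move=> [a b]; apply: eq_existsb => e; rewrite swap_inv_on_edge. Qed.

Lemma walk_cost_cat ps1 ps2 : walk_cost (ps1 ++ ps2) = walk_cost ps1 + walk_cost ps2.
Proof. by rewrite -big_split; apply: eq_bigr => e _; rewrite /ecount count_cat natrD mulrDl. Qed.

Lemma walk_cost_ge0 ps : 0 <= walk_cost ps.
Proof. by apply: sumr_ge0 => e _; rewrite mulr_ge0 ?ler0n. Qed.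

Lemma walk_cost_flatten pss : walk_cost (flatten pss) = \sum_(ps <- pss) walk_cost ps.
Proof.
elim: pss => [|ps pss IH]; last by rewrite /= walk_cost_cat big_cons IH.
by rewrite big_nil /walk_cost big1 // => e _; rewrite mul0r.
Qed.

Lemma walk_cost_le ps1 ps2 :
  (forall e, ecount e ps1 <= ecount e ps2)%N -> walk_cost ps1 <= walk_cost ps2.
Proof. by move=> le12; apply: ler_sum => e _; rewrite ler_wpM2r ?ler_nat. Qed.

Lemma walk_cost_rev_swap ps :
  walk_cost (rev (map (fun p : V * V => (p.2, p.1)) ps)) = walk_cost ps.
Proof. by apply: eq_bigr => e _; rewrite /ecount count_rev_swap //; apply: swap_inv_on_edge. Qed.

Lemma walk_cost_step (e : edge n) (a b : V) : val e = [set a; b] -> walk_cost [:: (a, b)] = c e.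
Proof.
move=> eab; rewrite /walk_cost (bigD1 e) //= /ecount /= /on_edge eab eqxx mul1r big1 ?addr0 //.
by move=> e' e'e; rewrite /ecount /= /on_edge -eab val_eqE (negbTE e'e) mul0r.
Qed.

Definition supp_path (u v : V) (r : seq V) := (last u r == v) && all supp_step (steps u r).

(* Codes of the paths with at most n nodes after the start; shortest paths are among them. *)
Definition path_code := ('I_n.+1 * n.-tuple V)%type.

Definition decode_path (kt : path_code) : seq V := take kt.1 kt.2.

Lemma decode_path_onto (r : seq V) (u : V) : (size r <= n)%N -> exists kt, decode_path kt = r.
Proof.
move=> size_r; have size_pad : size (take n (r ++ nseq n u)) == n.
  by rewrite size_take size_cat size_nseq; case: ifP => //; lia.
exists (Ordinal (size_r : (size r < n.+1)%N), Tuple size_pad).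
by rewrite /decode_path /= take_takel // take_size_cat.
Qed.

(* The shortest-path metric of the support graph for the lengths c, truncated at 1:
   a tour using an edge of length >= 1 is long enough anyway. *)
Definition trunc_dist (u v : V) : R :=
  \big[Num.min/1]_(kt | supp_path u v (decode_path kt)) walk_cost (steps u (decode_path kt)).

Lemma trunc_dist_le1 u v : trunc_dist u v <= 1.
Proof. exact: bigmin_le_id. Qed.

Lemma trunc_dist_ge0 u v : 0 <= trunc_dist u v.
Proof. by apply: le_bigmin => [|kt _]; rewrite ?ler01 ?walk_cost_ge0. Qed.

Lemma trunc_dist_le_path u v r : supp_path u v r -> trunc_dist u v <= walk_cost (steps u r).
Proof.
move=> /andP [/eqP ruv supp_r].
have [r' [r'u ur' sub' _]] := shorten_path r u.
have := size_uniq_lt_card ur'; rewrite card_ord => /ltnW size_r'.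
have [kt def_r'] := decode_path_onto u size_r'.
apply: le_trans (bigmin_le_cond _ (j := kt) _ _) _.
  rewrite /supp_path def_r' r'u ruv eqxx /=.
  by apply/allP => p /(mem_subseq sub'); apply/allP.
by rewrite def_r'; apply: walk_cost_le => e; apply: leq_count_subseq.
Qed.

Lemma trunc_dist_lt1 u v : trunc_dist u v < 1 ->
  exists2 r, supp_path u v r & walk_cost (steps u r) = trunc_dist u v.
Proof. by rewrite /trunc_dist => /bigmin_lt_id [kt path_kt ->]; exists (decode_path kt). Qed.

Lemma trunc_dist_sym_le u v : trunc_dist u v <= trunc_dist v u.
Proof.
have [/trunc_dist_lt1 [r /andP [/eqP rvu supp_r] <-]|] := ltP (trunc_dist v u) 1; last first.
  exact: le_trans (trunc_dist_le1 _ _).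
rewrite -walk_cost_rev_swap -steps_rev rvu; apply: trunc_dist_le_path.
rewrite /supp_path -{1}rvu last_rev_belast eqxx -rvu steps_rev all_rev all_map.
by apply: sub_all supp_r => p; rewrite /preim /= swap_inv_supp_step.
Qed.

Lemma trunc_dist_sym u v : trunc_dist u v = trunc_dist v u.
Proof. by apply/eqP; rewrite eq_le !trunc_dist_sym_le. Qed.

Lemma trunc_dist_triangle u v w : trunc_dist u v <= trunc_dist u w + trunc_dist w v.
Proof.
have [/trunc_dist_lt1 [r1 /andP [/eqP r1w supp1] <-]|] := ltP (trunc_dist u w) 1; last first.
  by move=> /(le_trans (trunc_dist_le1 u v)) /le_trans; apply; rewrite lerDl trunc_dist_ge0.
have [/trunc_dist_lt1 [r2 /andP [/eqP r2v supp2] <-]|] := ltP (trunc_dist w v) 1; last first.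
  by move=> /(le_trans (trunc_dist_le1 u v)) /le_trans; apply; rewrite lerDr walk_cost_ge0.
rewrite -r1w -walk_cost_cat -steps_cat; apply: trunc_dist_le_path.
by rewrite /supp_path last_cat r1w r2v eqxx steps_cat r1w all_cat supp1.
Qed.

Lemma trunc_dist_le_edge (e : edge n) (a b : V) :
  0 < x e -> val e = [set a; b] -> trunc_dist a b <= c e.
Proof.
move=> xe_gt0 eab; rewrite -(walk_cost_step eab) (trunc_dist_le_path (r := [:: b])) //.
by rewrite /supp_path /= eqxx andbT; apply/existsP; exists e; rewrite /on_edge eab eqxx.
Qed.

(* Minimizing over both orientations of e avoids choosing one. *)
Definition edge_dist (e : edge n) : R :=
  \big[Num.min/1]_(p : V * V | on_edge e p) trunc_dist p.1 p.2.

Lemma edge_distE (e : edge n) a b : val e = [set a; b] -> edge_dist e = trunc_dist a b.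
Proof.
move=> eab; apply/eqP; rewrite eq_le; apply/andP; split.
  by apply: (bigmin_le_cond _ (j := (a, b))); rewrite /on_edge eab.
apply: le_bigmin => [|p /(on_edgeP eab) [] ->]; rewrite ?trunc_dist_le1 //=.
by rewrite trunc_dist_sym.
Qed.

Lemma edge_dist_ge0 e : 0 <= edge_dist e.
Proof. by apply: le_bigmin => [|p _]; rewrite ?ler01 ?trunc_dist_ge0. Qed.

End Metric.

(** * Tours, walks and lambdas *)

Section Lambda.
Variables (R : realFieldType) (n : nat).
Local Notation V := 'I_n.

Definition lambda_term (L : {set V} -> V -> R) (i j : V) : R :=
  \sum_(k | k \notin [set i; j]) (- L [set i; j] k + L [set i; k] j + L [set j; k] i).

Definition lambda_unit (S0 : {set V}) (k0 : V) : {set V} -> V -> R :=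
  fun S k => ((S == S0) && (k == k0))%:R.

Lemma lambda_term_sum (I : Type) (r : seq I) (P : pred I) (F : I -> {set V} -> V -> R) i j :
  lambda_term (fun S k => \sum_(t <- r | P t) F t S k) i j =
  \sum_(t <- r | P t) lambda_term (F t) i j.
Proof. by rewrite /lambda_term exchange_big; apply: eq_bigr => k _; rewrite -sumrN -!big_split. Qed.

Lemma lambda_termZ (a : R) (L : {set V} -> V -> R) i j :
  lambda_term (fun S k => a * L S k) i j = a * lambda_term L i j.
Proof. by rewrite /lambda_term mulr_sumr; apply: eq_bigr => k _; ring. Qed.

Lemma eq_lambda_term (L L' : {set V} -> V -> R) i j :
  (forall S k, L S k = L' S k) -> lambda_term L i j = lambda_term L' i j.
Proof. by move=> LL'; apply: eq_bigr => k _; rewrite !LL'. Qed.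

Lemma lambda_term_decomp (L : {set V} -> V -> R) i j :
  lambda_term L i j = \sum_S0 \sum_k0 L S0 k0 * lambda_term (lambda_unit S0 k0) i j.
Proof.
rewrite (@eq_lambda_term _ (fun S k => \sum_S0 \sum_k0 L S0 k0 * lambda_unit S0 k0 S k)).
  rewrite lambda_term_sum; apply: eq_bigr => S0 _.
  by rewrite lambda_term_sum; apply: eq_bigr => k0 _; rewrite lambda_termZ.
move=> S k; rewrite (bigD1 S) //= (bigD1 k) //= /lambda_unit !eqxx mulr1.
rewrite !big1 ?addr0 // => [S0 /negbTE|k0 /negbTE].
  by rewrite eq_sym => ->; apply: big1 => k0 _; rewrite mulr0.
by rewrite andbC eq_sym => ->; rewrite mulr0.
Qed.

Lemma sum_eq_nat (P : pred V) (c : V) : \sum_(k | P k) ((k == c)%:R : R) = (P c)%:R.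
Proof.
have [Pc|nPc] := boolP (P c).
  by rewrite (bigD1 c) //= eqxx big1 ?addr0 // => k /andP [_ /negbTE ->].
by rewrite big1 // => k Pk; case: eqP => // kc; move: nPc; rewrite -kc Pk.
Qed.

(* A unit lambda at ({a, b}, k) acts as the shortcut of a -> k -> b. *)
Lemma lambda_term_unit (a b k i j : V) : a != b -> a != k -> b != k -> i != j ->
  lambda_term (lambda_unit [set a; b] k) i j =
  ([set i; j] == [set a; k])%:R + ([set i; j] == [set b; k])%:R - ([set i; j] == [set a; b])%:R.
Proof.
move=> ab ak bk ij.
pose X : R := - ([set i; j] == [set a; b])%:R.
pose Y : R := ((j == k) && (i == a))%:R + ((i == k) && (j == a))%:R.
pose Z : R := ((j == k) && (i == b))%:R + ((i == k) && (j == b))%:R.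
rewrite /lambda_term /lambda_unit.
rewrite (eq_bigr (fun k' => (k' == k)%:R * X + (k' == b)%:R * Y + (k' == a)%:R * Z)); last first.
  by move=> k' _; rewrite /X /Y /Z !set2_eqE; case_eqs; ring.
rewrite !big_split /= -!mulr_suml !sum_eq_nat /X /Y /Z !set2_eqE !inE.
by case_eqs; ring.
Qed.

Lemma lambda_term_unit_degen (S0 : {set V}) (k0 i j : V) : i != j ->
  ~~ ((#|S0| == 2) && (k0 \notin S0)) -> lambda_term (lambda_unit S0 k0) i j = 0.
Proof.
move=> ij degen; rewrite /lambda_term big1 // => k; rewrite !inE negb_or => /andP [ki kj].
rewrite /lambda_unit.
suff no_unit p q r : p != q -> r != p -> r != q -> ([set p; q] == S0) && (r == k0) = false.
  have ik : i != k by rewrite eq_sym.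
  have jk : j != k by rewrite eq_sym.
  have ji : j != i by rewrite eq_sym.
  by rewrite (no_unit i j k) // (no_unit i k j) // (no_unit j k i) //=; ring.
move=> pq rp rq; apply/negP => /andP [/eqP def_S0 /eqP def_k0]; move: degen.
by rewrite -def_S0 -def_k0 cards2 pq !inE negb_or rp rq.
Qed.

End Lambda.

Arguments lambda_unit {R n} S0 k0 S k.

Lemma steps_flatten (T : eqType) (u : T) q (rp : T * T -> seq T) :
  (forall p, p \in steps u q -> last p.1 (rp p) = p.2) ->
  steps u (flatten (map rp (steps u q))) = flatten (map (fun p => steps p.1 (rp p)) (steps u q)) /\
  last u (flatten (map rp (steps u q))) = last u q.
Proof.
elim: q u => [|v q IH] u //= rp_last.
have rp_uv : last u (rp (u, v)) = v by apply: (rp_last (u, v)); rewrite steps_cons mem_head.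
have [|IH1 IH2] := IH v; first by move=> p pq; apply: rp_last; rewrite steps_cons in_cons pq orbT.
by rewrite steps_cat rp_uv IH1 last_cat rp_uv IH2.
Qed.

Section TourCost.
Variables (R : realFieldType) (n : nat) (x c : edge n -> R).
Hypothesis c_ge0 : forall e, 0 <= c e.
Hypothesis n_gt2 : (2 < n)%N.
Hypothesis walk_cost_ge1 : forall w, is_walk x w -> 1 <= \sum_e (w e : nat)%:R * c e.
Local Notation V := 'I_n.
Local Notation dist := (trunc_dist x c).

Lemma walk_of_closed (u : V) W : last u W = u -> covers W -> all (supp_step x) (steps u W) ->
  (forall e, ecount e (steps u W) <= 2)%N ->
  exists2 w, is_walk x w & forall e, (w e : nat) = ecount e (steps u W).
Proof.
move=> Wu covW suppW small.
exists [ffun e => inord (ecount e (steps u W))]; last by move=> e; rewrite ffunE inordK // ltnS.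
case: W Wu covW suppW small => [|w1 W] Wu covW suppW small.
  by have := covW (Ordinal (ltnW (ltnW n_gt2))).
have def_W : w1 :: W = rcons (belast w1 W) u by rewrite [LHS]lastI; move: Wu => /= ->.
exists (u :: belast w1 W); rewrite zip_rot1_steps -def_W; split=> // [v|e].
  by move: (covW v); rewrite def_W mem_rcons.
by rewrite ffunE inordK // ltnS.
Qed.

Lemma closed_walk_cost_ge1 (u : V) W : last u W = u -> covers W ->
  all (supp_step x) (steps u W) -> 1 <= walk_cost c (steps u W).
Proof.
move=> Wu covW suppW.
have [u' [W' [W'u' covW' small cntW']]] := reduce_walk Wu covW.
have all_supp u0 W0 : all (supp_step x) (steps u0 W0) =
    (count (predC (supp_step x)) (steps u0 W0) <= 0)%N.
  by rewrite leqNgt -has_count has_predC negbK.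
have suppW' : all (supp_step x) (steps u' W').
  rewrite all_supp; apply: leq_trans (cntW' _ _) _; last by rewrite -all_supp.
  by move=> p; rewrite /= swap_inv_supp_step.
have [w walk_w wW'] := walk_of_closed W'u' covW' suppW' small.
apply: le_trans (walk_cost_ge1 walk_w) _; under eq_bigr do rewrite wW'.
by apply: walk_cost_le => // e; apply: cntW'; apply: swap_inv_on_edge.
Qed.

Lemma closure_closed_walk_ge1 (u : V) r : last u r = u -> covers r ->
  all proper_step (steps u r) -> 1 <= \sum_(p <- steps u r) dist p.1 p.2.
Proof.
move=> ru covr proper_r.
have dist_ge0 p : 0 <= dist p.1 p.2 by apply: trunc_dist_ge0.
have [/hasP [p pr far]|] := boolP (has (fun p => 1 <= dist p.1 p.2) (steps u r)).
  by rewrite (big_rem p pr) /=; apply: le_trans far _; rewrite lerDl sumr_ge0.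
rewrite -all_predC => /allP /= near.
have rp_ex p : exists r, dist p.1 p.2 < 1 ->
    supp_path x p.1 p.2 r /\ walk_cost c (steps p.1 r) = dist p.1 p.2.
  by have [/trunc_dist_lt1 [r' ? ?]|_] := ltP (dist p.1 p.2) 1; [exists r' | exists [::]].
have [rp rp_ok] := choice rp_ex.
have {}rp_ok p : p \in steps u r ->
    supp_path x p.1 p.2 (rp p) /\ walk_cost c (steps p.1 (rp p)) = dist p.1 p.2.
  by move=> pr; apply: rp_ok; rewrite ltNge; apply: near.
have rp_last p : p \in steps u r -> last p.1 (rp p) = p.2.
  by move=> /rp_ok [/andP [/eqP ->]].
have [W_steps W_last] := steps_flatten rp_last.
set W := flatten _ in W_steps W_last.
have <- : walk_cost c (steps u W) = \sum_(p <- steps u r) dist p.1 p.2.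
  rewrite W_steps walk_cost_flatten big_map big_seq_cond [RHS]big_seq_cond.
  by apply: eq_bigr => p /andP [/rp_ok [_ ->]].
apply: closed_walk_cost_ge1; first by rewrite W_last.
  move=> v; have [p pr <-] := mem_steps2 u (covr v); apply/flatten_mapP; exists p => //.
  rewrite -(rp_last p pr) mem_last_nonnil //; apply: contraTneq (allP proper_r p pr) => rp0.
  by rewrite /proper_step -(rp_last p pr) rp0 /= eqxx.
rewrite W_steps; apply/allP => q /flatten_mapP [p pr qp].
by have [/andP [_ /allP supp_rp] _] := rp_ok p pr; apply: supp_rp.
Qed.

Lemma sum_edge_eq (F : edge n -> R) (e0 : edge n) (X : {set V}) : val e0 = X ->
  \sum_e (val e == X)%:R * F e = F e0.
Proof.
move=> e0X; rewrite (bigD1 e0) //= -e0X eqxx mul1r big1 ?addr0 // => e e_e0.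
by rewrite val_eqE (negbTE e_e0) mul0r.
Qed.

Lemma sum_dist_steps ps : all proper_step ps ->
  \sum_(p <- ps) dist p.1 p.2 = \sum_e (ecount e ps)%:R * edge_dist x c e.
Proof.
elim: ps => [_|p ps IH /andP [proper_p /IH {}IH]].
  by rewrite big_nil big1 // => e _; rewrite mul0r.
have [e0 e0p] := exists_edge proper_p.
rewrite big_cons IH -(edge_distE x c_ge0 e0p) -(sum_edge_eq (edge_dist x c) e0p) -big_split /=.
by apply: eq_bigr => e _; rewrite /ecount /= natrD mulrDl.
Qed.

Lemma tour_cost_ge1 (T : {set edge n}) : is_tour T -> 1 <= \sum_e (e \in T)%:R * edge_dist x c e.
Proof.
move=> [s [us covs ->]].
have size_s : size s = n by rewrite -(card_uniqP us) -[RHS]card_ord; apply: eq_card.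
have s_gt2 : (2 < size s)%N by rewrite size_s.
case: s => [|y s'] in us covs size_s s_gt2 *; first by [].
set ps := zip (y :: s') (rot 1 (y :: s')).
have proper_ps : all proper_step ps.
  apply/allP => p pps; rewrite /proper_step (zip_next us pps) eq_sym.
  exact: (next_next_neq us s_gt2 (in_zip1 pps)).1.
have ge1 : 1 <= \sum_(p <- ps) dist p.1 p.2.
  rewrite /ps zip_rot1_steps; apply: closure_closed_walk_ge1; first exact: last_rcons.
    by move=> v; move: (covs v); rewrite mem_rcons.
  by rewrite -zip_rot1_steps.
apply: le_trans ge1 _; rewrite sum_dist_steps //; apply: ler_sum => e _.
rewrite ler_wpM2r ?edge_dist_ge0 // ler_nat.
case eT: (e \in _); first exact: ecount_tour_le1.
rewrite /= /ecount leqNgt -has_count; apply/hasP => -[p pps ep].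
move: eT; rewrite inE => /negbT/existsPn/(_ p.1).
by rewrite -(zip_next us pps) (eqP ep) eqxx.
Qed.


End TourCost.

Section WalksToTours.
Variables (R : realFieldType) (n : nat) (x : edge n -> R).
Hypothesis x_ge0 : forall e, 0 <= x e.
Hypothesis n_gt0 : (0 < n)%N.
Local Notation V := 'I_n.

Lemma walk_supp w e : is_walk x w -> (0 < w e)%N -> 0 < x e.
Proof.
move=> [s [_ supp_s ->]]; rewrite -has_count => /hasP [p ps ep].
have /existsP [e' /andP [/eqP e'p]] := allP supp_s p ps.
by have -> : e = e' by apply: val_inj; rewrite e'p; apply/eqP.
Qed.

Lemma walk_has_edge w : is_walk x w -> exists e, (0 < w e)%N.
Proof.
move=> [[|y s] [covs supp_s cnt]]; first by have := covs (Ordinal n_gt0).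
move: supp_s cnt; rewrite zip_rot1_steps {covs}.
case: s => [|z s] /= /andP [/existsP [e /andP [/eqP ep _]] _] cnt; exists e;
  by rewrite cnt /= ep eqxx.
Qed.

(* Shortcutting a walk into a tour: the shortcuts are paid for by unit lambdas. *)
Lemma walk_dominates_tour w : is_walk x w -> exists (T : {set edge n}) (L : {set V} -> V -> R),
  [/\ is_tour T, forall S k, 0 <= L S k &
      forall e i j, val e = [set i; j] -> (e \in T)%:R + lambda_term L i j <= (w e)%:R].
Proof.
move=> [[|y s] [covs supp_s cnt]]; first by have := covs (Ordinal n_gt0).
rewrite zip_rot1_steps in supp_s cnt.
have proper_s : all proper_step (steps y (rcons s y)).
  apply/allP => p /(allP supp_s) /existsP [e /andP [ep _]].
  exact: edge_neq (eqP ep).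
have cov_s : covers (rcons s y) by move=> v; move: (covs v); rewrite mem_rcons.
have [u' [r' [tl [r'u' covr' ur' proper_tl cnt']]]] :=
  shortcut_walk R (last_rcons y s y) cov_s proper_s.
exists [set e : edge n | [exists v, val e == [set v; next r' v]]].
exists (fun S k => \sum_(t <- tl) lambda_unit [set t.1.1; t.1.2] t.2 S k).
split=> [|S k|e i j eij]; first by exists r'.
  by apply: sumr_ge0 => t _; rewrite ler0n.
rewrite lambda_term_sum cnt; apply: le_trans (cnt' e); apply: lerD.
  rewrite ler_nat inE; case: existsP => // -[v /eqP ev].
  rewrite /ecount -has_count; apply/hasP; exists (v, next r' v).
    exact: next_in_steps.
  by rewrite /on_edge ev.
rewrite !big_seq; apply: ler_sum => t tl_t.
have /and3P [t12 t1k t2k] := allP proper_tl t tl_t.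
by rewrite lambda_term_unit ?(edge_neq eij) // /shortcut_vec eij.
Qed.

Lemma DOPTII_row_le mu e : feasible_DOPTII x mu ->
  \sum_(w | `[< is_walk x w >]) (w e)%:R * mu w <= x e.
Proof.
move=> [mu_le_x _]; have [/mu_le_x //|xe_le0] := ltP 0 (x e).
rewrite big1 ?x_ge0 // => w /asboolP walk_w.
have [->|/(walk_supp walk_w)] := posnP (w e); first by rewrite mul0r.
by rewrite ltNge xe_le0.
Qed.

Lemma DOPTplus_of_DOPTII mu : feasible_DOPTII x mu ->
  exists L mup, feasible_DOPTplus x L mup /\ obj_DOPTplus mup = obj_DOPTII x mu.
Proof.
move=> feas; have [_ mu_ge0] := feas.
have tour_of (w : {ffun edge n -> 'I_3}) : exists TL : {set edge n} * ({set V} -> V -> R),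
    is_walk x w -> [/\ is_tour TL.1, forall S k, 0 <= TL.2 S k &
      forall e i j, val e = [set i; j] -> (e \in TL.1)%:R + lambda_term TL.2 i j <= (w e)%:R].
  have [/asboolP /walk_dominates_tour [T [L TL_ok]]|not_walk] := boolP `[< is_walk x w >].
    by exists (T, L).
  by exists (set0, fun _ _ => 0) => /asboolP walk_w; move: not_walk; rewrite walk_w.
have [f f_ok] := choice tour_of.
pose mup T := \sum_(w | `[< is_walk x w >]) ((f w).1 == T)%:R * mu w.
pose L S k := \sum_(w | `[< is_walk x w >]) mu w * (f w).2 S k.
have pick_tour (g : {set edge n} -> R) w : is_walk x w ->
    \sum_(T | `[< is_tour T >]) ((f w).1 == T)%:R * g T = g (f w).1.
  move=> /f_ok [tour_fw _ _]; rewrite (bigD1 (f w).1) /=; last exact/asboolP.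
  by rewrite eqxx mul1r big1 ?addr0 // => T /andP [_ /negbTE]; rewrite eq_sym => ->; rewrite mul0r.
exists L, mup; split.
  split=> [e i j eij|i j k _ _ _|T _].
  - rewrite eij -/(lambda_term L i j) lambda_term_sum.
    have -> : \sum_(T | `[< is_tour T >]) (e \in T)%:R * mup T =
              \sum_(w | `[< is_walk x w >]) (e \in (f w).1)%:R * mu w.
      rewrite /mup; under eq_bigr do rewrite mulr_sumr; rewrite exchange_big /=.
      apply: eq_bigr => w /asboolP walk_w.
      rewrite -(pick_tour (fun T => (e \in T)%:R * mu w) _ walk_w).
      by apply: eq_bigr => T _; ring.
    rewrite -big_split /=; apply: le_trans (DOPTII_row_le e feas).
    apply: ler_sum => w /asboolP walk_w; rewrite lambda_termZ mulrC -mulrDl addrC.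
    by have [_ _ dom] := f_ok w walk_w; rewrite ler_wpM2r ?mu_ge0 ?dom.
  - apply: sumr_ge0 => w /asboolP walk_w.
    by have [_ fw_ge0 _] := f_ok w walk_w; rewrite mulr_ge0 ?mu_ge0.
  - by apply: sumr_ge0 => w /asboolP walk_w; rewrite mulr_ge0 ?ler0n ?mu_ge0.
rewrite /obj_DOPTplus /mup exchange_big; apply: eq_bigr => w /asboolP walk_w.
exact: (pick_tour (fun=> mu w)).
Qed.

End WalksToTours.

Section DualBounds.
Variables (R : realFieldType) (n : nat) (x c : edge n -> R).
Hypothesis c_ge0 : forall e, 0 <= c e.
Hypothesis x_ge0 : forall e, 0 <= x e.
Hypothesis n_gt2 : (2 < n)%N.
Hypothesis walk_cost_ge1 : forall w, is_walk x w -> 1 <= \sum_e (w e : nat)%:R * c e.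
Local Notation V := 'I_n.
Local Notation d := (edge_dist x c).

(* The triangle inequality of the metric d is what makes the lambdas harmless. *)
Lemma lambda_cost_ge0 (ends : edge n -> V * V) (L : {set V} -> V -> R) :
  (forall e, val e = [set (ends e).1; (ends e).2]) ->
  (forall i j k : V, i != j -> k != i -> k != j -> 0 <= L [set i; j] k) ->
  0 <= \sum_e d e * lambda_term L (ends e).1 (ends e).2.
Proof.
move=> ends_ok L_ge0; have ends_neq e : (ends e).1 != (ends e).2 by apply: edge_neq (ends_ok e).
under eq_bigr do rewrite lambda_term_decomp mulr_sumr; rewrite exchange_big /=.
apply: sumr_ge0 => S0 _; under eq_bigr do rewrite mulr_sumr; rewrite exchange_big /=.
apply: sumr_ge0 => k0 _.
under eq_bigr do rewrite mulrCA; rewrite -mulr_sumr.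
have [|degen] := boolP ((#|S0| == 2) && (k0 \notin S0)); last first.
  by rewrite big1 ?mulr0 // => e _; rewrite lambda_term_unit_degen ?mulr0.
case/andP => /cards2P [a [b [ab ->]]]; rewrite !inE negb_or => /andP [k0a k0b].
rewrite mulr_ge0 ?L_ge0 //.
have [ak bk] : a != k0 /\ b != k0 by rewrite !(eq_sym _ k0).
under eq_bigr do rewrite lambda_term_unit // -(ends_ok _) mulrC mulrBl mulrDl.
rewrite sumrB big_split /=.
have [e1 e1_ok] := exists_edge ak; have [e2 e2_ok] := exists_edge bk.
have [e3 e3_ok] := exists_edge ab.
rewrite !(sum_edge_eq _ e1_ok, sum_edge_eq _ e2_ok, sum_edge_eq _ e3_ok) subr_ge0.
rewrite (edge_distE x c_ge0 e1_ok) (edge_distE x c_ge0 e2_ok) (edge_distE x c_ge0 e3_ok).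
by rewrite [trunc_dist x c b k0]trunc_dist_sym //; apply: trunc_dist_triangle.
Qed.

Lemma DOPTplus_obj_le (L : {set V} -> V -> R) (mu : {set edge n} -> R) :
  feasible_DOPTplus x L mu -> obj_DOPTplus mu <= \sum_e c e * x e.
Proof.
move=> [mu_le_x L_ge0 mu_ge0].
have ends_ex (e : edge n) : exists p : V * V, val e = [set p.1; p.2].
  by have /cards2P [a [b [_ eab]]] := valP e; exists (a, b).
have [ends ends_ok] := choice ends_ex.
pose lam e := lambda_term L (ends e).1 (ends e).2.
have tours_le e : \sum_(T | `[< is_tour T >]) (e \in T)%:R * mu T <= x e - lam e.
  have := mu_le_x e _ _ (ends_ok e); rewrite (ends_ok e) -/(lambda_term L _ _).
  by rewrite lerBrDr addrC.
apply: (@le_trans _ _ (\sum_(T | `[< is_tour T >]) mu T * \sum_e (e \in T)%:R * d e)).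
  apply: ler_sum => T /asboolP tourT; rewrite -{1}(mulr1 (mu T)) ler_wpM2l ?mu_ge0 //.
  by have := tour_cost_ge1 c_ge0 n_gt2 walk_cost_ge1 tourT.
under eq_bigr do rewrite mulr_sumr; rewrite exchange_big /=.
apply: (@le_trans _ _ (\sum_e d e * (x e - lam e))).
  apply: ler_sum => e _.
  rewrite (eq_bigr (fun T : {set edge n} => d e * ((e \in T)%:R * mu T))) => [|T _]; last by ring.
  by rewrite -mulr_sumr ler_wpM2l ?edge_dist_ge0.
rewrite [X in X <= _](eq_bigr (fun e => d e * x e - d e * lam e)) => [|e _]; last by rewrite mulrBr.
rewrite sumrB lerBlDr.
apply: le_trans (_ : _ <= \sum_e c e * x e) _; last by rewrite lerDl; apply: lambda_cost_ge0.
apply: ler_sum => e _; have [xe_gt0|] := ltP 0 (x e).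
  rewrite ler_wpM2r ?x_ge0 // (edge_distE x c_ge0 (ends_ok e)).
  exact: trunc_dist_le_edge (ends_ok e).
move=> xe_le0; have -> : x e = 0 by apply/eqP; rewrite eq_le xe_le0 x_ge0.
by rewrite !mulr0.
Qed.

Lemma DOPTII_obj_le mu : feasible_DOPTII x mu -> obj_DOPTII x mu <= \sum_e c e * x e.
Proof.
move=> feas; have [_ mu_ge0] := feas.
apply: (@le_trans _ _ (\sum_(w | `[< is_walk x w >]) mu w * \sum_e (w e)%:R * c e)).
  apply: ler_sum => w /asboolP walk_w; rewrite -{1}(mulr1 (mu w)).
  by rewrite ler_wpM2l ?mu_ge0 ?walk_cost_ge1.
under eq_bigr do rewrite mulr_sumr; rewrite exchange_big /=; apply: ler_sum => e _.
rewrite (eq_bigr (fun w : {ffun edge n -> 'I_3} => c e * ((w e)%:R * mu w))) => [|w _].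
  by rewrite -mulr_sumr ler_wpM2l ?DOPTII_row_le.
by ring.
Qed.

End DualBounds.

Theorem mainTheorem6 (R : realFieldType) (n : nat) (x : edge n -> R) :
  (3 <= n)%N -> is_vertex_PSEP x ->
  exists v : R, opt_DOPTplus x v /\ opt_DOPTII x v.
Proof.
move=> n_ge3 [[_ _ x01] _]; have x_ge0 e : 0 <= x e by case/andP: (x01 e).
have n_gt0 : (0 < n)%N by apply: leq_trans n_ge3.
have walk_col w : `[< is_walk x w >] -> exists e, 0 < (w e)%:R :> R.
  by move=> /asboolP /(walk_has_edge n_gt0) [e we]; exists e; rewrite ltr0n.
have [mu [c [mu_ge0 mu_le_x c_ge0 cover_c cx_le]]] :=
  packing_duality (fun (w : {ffun edge n -> 'I_3}) e => ler0n R (w e)) x_ge0 walk_col.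
have walk_cost_ge1 w : is_walk x w -> 1 <= \sum_e (w e)%:R * c e.
  by move=> walk_w; apply: cover_c; apply/asboolP.
have feas : feasible_DOPTII x mu.
  by split=> [e _|w _]; rewrite ?mu_ge0 //; under eq_bigr do rewrite mulrC; apply: mu_le_x.
exists (obj_DOPTII x mu); split; split.
- by have [L [mup [? <-]]] := DOPTplus_of_DOPTII x_ge0 n_gt0 feas; exists L, mup.
- by move=> L mup /(DOPTplus_obj_le c_ge0 x_ge0 n_ge3 walk_cost_ge1) /le_trans; apply.
- by exists mu.
- by move=> mu' /(DOPTII_obj_le c_ge0 x_ge0 walk_cost_ge1) /le_trans; apply.
Qed.
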